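(* Let $n\ge0$, $r\in\mathcal{Y}_n$ and $\mathsf{R}\subseteq[n]$, regarded as a set of internal nodes of $r$ via the in-order labeling. Then $\lambda(\pi_{\mathsf{R}})\le r$ in the Tamari order if and only if $\mathsf{R}$ is admissible.
   Context: Permutations in one-line notation; $\mathrm{st}$ standardizes sequences of distinct integers. For $\mathsf{R}=\{R_1<\dots<R_p\}\subseteq[n]$ with complement $\{R^c_1<\dots<R^c_q\}$, $\pi_{\mathsf{R}}\in\mathfrak{S}_n$ is defined by $\pi_{\mathsf{R}}^{-1}=(R_1,..,R_p,R^c_1,..,R^c_q)$ in one-line notation. Trees: $\mathcal{Y}_n$ = rooted planar binary trees with $n$ internal nodes, $\mathcal{Y}_0=\{|\}$; $s\vee t$ = root with left subtree $s$, right subtree $t$. Tamari order: generated by replacing a subtree $(a\vee b)\vee c$ by the larger $a\vee(b\vee c)$. $\lambda(\mathrm{id}_0)=|$, $\lambda(\sigma)=\lambda(\mathrm{st}(\sigma(1..j-1)))\vee\lambda(\mathrm{st}(\sigma(j+1..n)))$ where $j=\sigma^{-1}(n)$. In-order labeling of the internal nodes of $r\in\mathcal{Y}_n$ by $1,\dots,n$: if $r=s\vee t$ with $s\in\mathcal{Y}_{j-1}$, the root gets label $j$, nodes of $s$ keep their labels in $s$, and nodes of $t$ get their labels in $t$ increased by $j$. A set $\mathsf{R}$ of internal nodes is admissible if for each $x\in\mathsf{R}$ the left child of $x$ (if internal) and all its internal descendants lie in $\mathsf{R}$. *)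

From mathcomp Require Import all_boot.
From Stdlib Require Import Relations.
Set Implicit Arguments. Unset Strict Implicit. Unset Printing Implicit Defensive.

(* Rooted planar binary trees; [leaf] is the tree | with no internal node,
   [node s t] is s \/ t. *)
Inductive tree : Type := leaf | node of tree & tree.

(* number of internal nodes; Y_n = trees with tnodes = n *)
Fixpoint tnodes (t : tree) : nat :=
  if t is node s u then (tnodes s + tnodes u).+1 else 0.

Inductive tamari_step : tree -> tree -> Prop :=
| ts_rot a b c : tamari_step (node (node a b) c) (node a (node b c))
| ts_left s s' u : tamari_step s s' -> tamari_step (node s u) (node s' u)
| ts_right s u u' : tamari_step u u' -> tamari_step (node s u) (node s u').

Definition tamari_le : tree -> tree -> Prop := clos_refl_trans tree tamari_step.

(* standardization of a sequence of distinct integers to values 1..k *)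
Definition st (s : seq nat) : seq nat :=
  [seq count (fun y => y <= x) s | x <- s].

(* lambda on (one-line notations of) permutations of {1..k}:
   lambda(sigma) = lambda(st(sigma(1..j-1))) \/ lambda(st(sigma(j+1..k)))
   where j = sigma^{-1}(k).  Fuel = length. *)
Fixpoint lambda_rec (fuel : nat) (s : seq nat) : tree :=
  match fuel with
  | 0 => leaf
  | f.+1 =>
    if s is [::] then leaf else
    let j := index (size s) s in
    node (lambda_rec f (st (take j s))) (lambda_rec f (st (drop j.+1 s)))
  end.

Definition lambda (s : seq nat) : tree := lambda_rec (size s) s.

(* pi_R in S_n, in one-line notation, for R a subset of [n]:
   pi_R^{-1} = (R_1,..,R_p,R^c_1,..,R^c_q), so pi_R(i) = position of i
   in that word (1-based). *)
Definition piR (n : nat) (R : seq nat) : seq nat :=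
  let w := [seq i <- iota 1 n | i \in R] ++ [seq i <- iota 1 n | i \notin R] in
  [seq (index i w).+1 | i <- iota 1 n].

(* in-order labels of the internal nodes of t, shifted by off:
   for t = s \/ u with s in Y_{j-1}, the root gets off + j, nodes of s keep
   their labels (shifted by off), nodes of u are shifted by off + j. *)
Fixpoint labels (t : tree) (off : nat) : seq nat :=
  if t is node s u then
    let j := (tnodes s).+1 in
    labels s off ++ (off + j) :: labels u (off + j)
  else [::].

Fixpoint admissible_rec (t : tree) (off : nat) (R : seq nat) : bool :=
  if t is node s u then
    let j := (tnodes s).+1 in
    [&& ((off + j) \in R) ==> all (fun y => y \in R) (labels s off),
        admissible_rec s off R & admissible_rec u (off + j) R]
  else true.

Definition admissible (t : tree) (R : seq nat) : bool := admissible_rec t 0 R.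

From mathcomp Require Import all_boot zify.
From Stdlib Require Import Relations.
Set Implicit Arguments. Unset Strict Implicit. Unset Printing Implicit Defensive.

(* Let c be the largest element of [1, n] outside R.  Then pi_R takes its
   maximum at position c and increases after it, so lambda(pi_R) is
   lambda(pi_(R cap [1, c-1])) \/ comb (n - c), where comb k is the left comb
   with k nodes; if R contains [1, n], lambda(pi_R) is comb n.  This shape is
   admissible for R, and admissibility survives Tamari rotations, whence one
   direction.  Conversely, let r = s \/ u be admissible with root k+1.  Either
   k+1 is not in R, or R contains [1, k+1]; in both cases one rotation gives
   lambda(pi_R) <= lambda(pi_(R cap [1, k])) \/ lambda(pi_(R - (k+1))), and
   induction on r concludes. *)

Lemma iotaSr m n : iota m n.+1 = rcons (iota m n) (m + n).
Proof. by rewrite -addn1 iotaD cats1. Qed.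

Lemma all_iota_shift (P : pred nat) a b n :
  all (fun i => P (a + i)) (iota b n) = all P (iota (a + b) n).
Proof. by rewrite iotaDl all_map. Qed.

Lemma index_iota m n i : m <= i < m + n -> index i (iota m n) = i - m.
Proof.
elim: n m => [|n IH] m Hi; first lia.
rewrite /= /index /=; case: eqP => [<- | ne]; first by rewrite subnn.
rewrite -/(index i _) IH; lia.
Qed.

Lemma map_index_uniq (T : eqType) (w : seq T) :
  uniq w -> map (index^~ w) w = iota 0 (size w).
Proof.
elim: w => //= x w IH /andP[xw uw]; rewrite eqxx (iotaDl 1 0) -IH // -map_comp.
congr (_ :: _); apply/eq_in_map => y yw /=.
by case: eqP => [xy | _]; rewrite // xy yw in xw.
Qed.

Lemma filterN_nil (P : pred nat) s : all P s -> [seq i <- s | ~~ P i] = [::].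
Proof.
move=> /allP Ps; rewrite (eq_in_filter (a2 := pred0)) ?filter_pred0 //.
by move=> i /Ps ->.
Qed.

Lemma count_leq_iota x k : count (fun y => y <= x) (iota 1 k) = minn x k.
Proof.
elim: k => [|k IH]; first by rewrite minn0.
by rewrite iotaSr -cats1 count_cat IH /= add1n; case: leqP; lia.
Qed.

Lemma tamari_le_refl t : tamari_le t t.
Proof. exact: rt_refl. Qed.

Lemma tamari_le_trans s t u : tamari_le s t -> tamari_le t u -> tamari_le s u.
Proof. exact: rt_trans. Qed.

Lemma tamari_le_lift (f : tree -> tree) :
  (forall x y, tamari_step x y -> tamari_step (f x) (f y)) ->
  forall x y, tamari_le x y -> tamari_le (f x) (f y).
Proof.
move=> fstep x y; elim=> [{}x {}y xy | {}x | {}x z {}y _ xz _ zy].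
- exact/rt_step/fstep.
- exact: tamari_le_refl.
- exact: tamari_le_trans xz zy.
Qed.

Lemma tamari_le_node s s' u u' :
  tamari_le s s' -> tamari_le u u' -> tamari_le (node s u) (node s' u').
Proof.
move=> ss' uu'; apply: (@tamari_le_trans _ (node s' u)).
- by apply: (tamari_le_lift (f := node^~ u)) ss' => x y; apply: ts_left.
- by apply: (tamari_le_lift (f := node s')) uu' => x y; apply: ts_right.
Qed.

Lemma tamari_le_rotate a b c : tamari_le (node (node a b) c) (node a (node b c)).
Proof. exact/rt_step/ts_rot. Qed.

Fixpoint comb n := if n is k.+1 then node (comb k) leaf else leaf.

Lemma tnodes_comb n : tnodes (comb n) = n.
Proof. by elim: n => //= n ->; rewrite addn0. Qed.

Lemma comb_le_node a b : tamari_le (comb (a.+1 + b)) (node (comb a) (comb b)).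
Proof.
elim: b => [|b IH]; first by rewrite addn0; apply: tamari_le_refl.
rewrite addnS; apply: tamari_le_trans _ (tamari_le_rotate _ _ _).
exact: tamari_le_node IH (tamari_le_refl _).
Qed.

Lemma labels_iota t off : labels t off = iota off.+1 (tnodes t).
Proof.
elim: t off => [|s IHs u IHu] off //.
rewrite [LHS]/= [tnodes (node _ _)]/= IHs IHu.
by rewrite -[(_ + _).+1 in RHS]addnS iotaD addnS addSn.
Qed.

Fixpoint adm (t : tree) (off : nat) (P : pred nat) : bool :=
  if t is node s u then
    [&& P (off + (tnodes s).+1) ==> all P (labels s off),
        adm s off P & adm u (off + (tnodes s).+1) P]
  else true.

Lemma admissible_recE t off R :
  admissible_rec t off R = adm t off (fun x => x \in R).
Proof. by elim: t off => //= s IHs u IHu off; rewrite IHs IHu. Qed.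

Lemma adm_shift t c off (P : pred nat) :
  adm t (c + off) P = adm t off (fun i => P (c + i)).
Proof.
elim: t off => //= s IHs u IHu off.
by rewrite !labels_iota -addnS all_iota_shift -addnA IHs IHu addnA.
Qed.

Lemma adm_all t off (P : pred nat) : all P (labels t off) -> adm t off P.
Proof.
elim: t off => //= s IHs u IHu off; rewrite all_cat /= => /and3P[Ps _ Pu].
by rewrite Ps implybT IHs ?IHu.
Qed.

Lemma tnodes_step t t' : tamari_step t t' -> tnodes t = tnodes t'.
Proof. by elim=> /= *; lia. Qed.

Lemma adm_step t t' off (P : pred nat) :
  tamari_step t t' -> adm t off P -> adm t' off P.
Proof.
move=> tt'; elim: tt' off => [a b c | s s' u ss' IH | s u u' uu' IH] off /=.
- have -> : off + (tnodes a + tnodes b).+2 = off + (tnodes a).+1 + (tnodes b).+1.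
    by lia.
  move=> /and3P[/implyP Proot /and3P[-> -> ->] ->]; rewrite /= andbT.
  by apply/implyP => /Proot; rewrite all_cat /= => /and3P[].
- by rewrite !labels_iota (tnodes_step ss') => /and3P[-> /IH -> ->].
- by move=> /and3P[-> -> /IH ->].
Qed.

Lemma adm_tamari_le t t' off (P : pred nat) :
  tamari_le t t' -> adm t off P -> adm t' off P.
Proof.
elim=> [x y /adm_step | // | x y z _ xy _ yz]; first exact.
by move=> /xy /yz.
Qed.

Variant last_notin_spec (P : pred nat) (n : nat) : Prop :=
  | AllIn of all P (iota 1 n)
  | LastNotin m d of n = m.+1 + d & ~~ P m.+1 & all P (iota m.+2 d).

Lemma last_notinP (P : pred nat) n : last_notin_spec P n.
Proof.
elim: n => [|n IH]; first exact: AllIn.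
case: (boolP (P n.+1)) => [Pn | nPn]; last first.
  by apply: (@LastNotin _ _ n 0); rewrite ?addn0.
case: IH Pn => [Pall | m d -> Pm Prun] Pn.
- by apply: AllIn; rewrite iotaSr all_rcons Pn.
- apply: (@LastNotin _ _ m d.+1) => //; first by rewrite addnS.
  by rewrite iotaSr all_rcons Prun addSn Pn.
Qed.

(* [pi_tree P n d] is lambda(pi_R) in S_(n+d) for R = {i <= n | P i} together
   with the d values after n; these only lengthen the final comb. *)
Fixpoint pi_tree (P : pred nat) (n d : nat) : tree :=
  if n is k.+1 then
    if P k.+1 then pi_tree P k d.+1 else node (pi_tree P k 0) (comb d)
  else comb d.

Lemma tnodes_pi_tree P n d : tnodes (pi_tree P n d) = n + d.
Proof.
elim: n d => [|n IH] d /=; first by rewrite tnodes_comb.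
by case: (P n.+1); rewrite /= !IH ?tnodes_comb; lia.
Qed.

Lemma pi_tree_run (P : pred nat) m j d : all P (iota m.+1 j) ->
  pi_tree P (m + j) d = pi_tree P m (j + d).
Proof.
elim: j d => [|j IH] d; first by rewrite addn0.
rewrite iotaSr all_rcons addnS /= => /andP[Pj /IH ->].
by rewrite -addSn Pj addnS addSn.
Qed.

Lemma pi_tree_all (P : pred nat) n : all P (iota 1 n) -> pi_tree P n 0 = comb n.
Proof. by move=> Pall; rewrite -[n]add0n pi_tree_run // addn0. Qed.

Lemma pi_tree_last (P : pred nat) m d : ~~ P m.+1 -> all P (iota m.+2 d) ->
  pi_tree P (m.+1 + d) 0 = node (pi_tree P m 0) (comb d).
Proof. by move=> Pm Prun; rewrite pi_tree_run // addn0 /= (negbTE Pm). Qed.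

Lemma adm_pi_tree (P : pred nat) n : adm (pi_tree P n 0) 0 P.
Proof.
elim/ltn_ind: n => n; case: (last_notinP P n) => [Pall | m d -> Pm Prun] IH.
- by rewrite pi_tree_all //; apply: adm_all; rewrite labels_iota tnodes_comb.
- rewrite pi_tree_last //= tnodes_pi_tree addn0 (negbTE Pm).
  rewrite IH ?addSn ?ltnS ?leq_addr //=.
  by apply: adm_all; rewrite labels_iota tnodes_comb add0n.
Qed.

Lemma pi_tree_le_node (P : pred nat) k d : P k.+1 ==> all P (iota 1 k) ->
  tamari_le (pi_tree P (k.+1 + d) 0)
            (node (pi_tree P k 0) (pi_tree (fun i => P (k.+1 + i)) d 0)).
Proof.
move=> Pk; elim/ltn_ind: d => d.
case: (last_notinP (fun i => P (k.+1 + i)) d) => [Prun | m e -> Pm Prun] IH.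
- rewrite (pi_tree_all Prun); rewrite all_iota_shift addn1 in Prun.
  case: (boolP (P k.+1)) => [Pk1 | nPk1].
  + rewrite !pi_tree_all ?(implyP Pk) //; first exact: comb_le_node.
    by rewrite iotaD all_cat iotaSr all_rcons add1n Pk1 (implyP Pk).
  + by rewrite pi_tree_last //; apply: tamari_le_refl.
- rewrite (@pi_tree_last (fun i => P (k.+1 + i))) // addnA addnS.
  rewrite all_iota_shift !addnS in Prun; rewrite addnS in Pm.
  rewrite pi_tree_last //.
  apply: tamari_le_trans _ (tamari_le_rotate _ _ _).
  apply: tamari_le_node (IH m _) (tamari_le_refl _).
  by rewrite addSn ltnS leq_addr.
Qed.

Lemma pi_tree_le r (P : pred nat) :
  adm r 0 P -> tamari_le (pi_tree P (tnodes r) 0) r.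
Proof.
elim: r P => [|s IHs u IHu] P /=; first by move=> _; apply: tamari_le_refl.
rewrite add0n labels_iota => /and3P[Proot Ps Pu].
rewrite -addSn; apply: tamari_le_trans (pi_tree_le_node _ Proot) _.
by apply: tamari_le_node (IHs _ Ps) (IHu _ _); rewrite -adm_shift addn0.
Qed.

Lemma st_id s : perm_eq s (iota 1 (size s)) -> st s = s.
Proof.
move=> ps; rewrite /st -[RHS]map_id; apply/eq_in_map => x xs /=.
rewrite (permP ps) count_leq_iota.
by move: xs; rewrite (perm_mem ps) mem_iota; lia.
Qed.

Lemma st_mono (h : nat -> nat) s : {mono h : x y / x <= y} -> st (map h s) = st s.
Proof.
move=> hmono; rewrite /st -map_comp; apply: eq_map => x /=.
by rewrite count_map; apply: eq_count => y /=; rewrite hmono.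
Qed.

Lemma lambda_rec_nil f : lambda_rec f [::] = leaf.
Proof. by case: f. Qed.

Lemma lambda_rec_cat f A x B : x = (size A + size B).+1 -> x \notin A ->
  lambda_rec f.+1 (A ++ x :: B) =
    node (lambda_rec f (st A)) (lambda_rec f (st B)).
Proof.
move=> Ex xA; have Es : size (A ++ x :: B) = x by rewrite size_cat /= addnS Ex.
have unfold s : s != [::] -> lambda_rec f.+1 s =
    node (lambda_rec f (st (take (index (size s) s) s)))
         (lambda_rec f (st (drop (index (size s) s).+1 s))) by case: s.
rewrite unfold; last by rewrite -size_eq0 Es Ex.
rewrite Es index_cat (negbTE xA) /= eqxx addn0 take_size_cat //.
by rewrite drop_cat ltnNge leqnSn subSnn /= drop0.
Qed.

Lemma lambda_rec_iota f k : k <= f -> lambda_rec f (iota 1 k) = comb k.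
Proof.
elim: f k => [|f IH] [|k] // k_le.
rewrite iotaSr -cats1 lambda_rec_cat ?size_iota ?addn0 ?add1n ?mem_iota //.
  by rewrite st_id ?size_iota // IH // lambda_rec_nil.
lia.
Qed.

Definition pi_of (P : pred nat) (n : nat) : seq nat :=
  let w := [seq i <- iota 1 n | P i] ++ [seq i <- iota 1 n | ~~ P i] in
  [seq (index i w).+1 | i <- iota 1 n].

Lemma size_pi_of (P : pred nat) n : size (pi_of P n) = n.
Proof. by rewrite size_map size_iota. Qed.

Lemma pi_of_perm (P : pred nat) n : perm_eq (pi_of P n) (iota 1 n).
Proof.
rewrite /pi_of; set w := _ ++ _.
have ew : perm_eq (iota 1 n) w by rewrite perm_sym perm_filterC.
apply: perm_trans (perm_map _ ew) _.
rewrite (map_comp succn (index^~ w)) map_index_uniq -?(perm_uniq ew) //.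
  by rewrite -(perm_size ew) size_iota (iotaDl 1 0).
exact: iota_uniq.
Qed.

Lemma pi_of_all (P : pred nat) n : all P (iota 1 n) -> pi_of P n = iota 1 n.
Proof.
move=> Pall; rewrite /pi_of (all_filterP Pall) (filterN_nil Pall) cats0.
rewrite -[RHS]map_id; apply/eq_in_map => i; rewrite mem_iota => Hi.
by rewrite index_iota //; lia.
Qed.

Lemma pi_of_last (P : pred nat) m d : ~~ P m.+1 -> all P (iota m.+2 d) ->
  pi_of P (m.+1 + d) =
    [seq if v <= count P (iota 1 m) then v else v + d | v <- pi_of P m]
    ++ m.+1 + d :: [seq count P (iota 1 m) + j | j <- iota 1 d].
Proof.
move=> Pm Prun; rewrite /pi_of.
set wP := [seq i <- iota 1 m | P i]; set wN := [seq i <- iota 1 m | ~~ P i].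
have -> : iota 1 (m.+1 + d) = iota 1 m ++ m.+1 :: iota m.+2 d.
  by rewrite addSnnS iotaD.
rewrite !filter_cat /= Pm (negbTE Pm) /= (all_filterP Prun) (filterN_nil Prun).
rewrite -/wP -/wN -catA.
have sizeN : size wP + size wN = m by rewrite !size_filter count_predC size_iota.
rewrite map_cat /= -size_filter -/wP; congr (_ ++ _ :: _).
- rewrite -map_comp; apply/eq_in_map => i; rewrite mem_iota => Hi /=.
  rewrite !index_cat mem_iota size_iota.
  have -> : (m.+1 < i < m.+2 + d) = false by lia.
  case: ifP => iP; first by rewrite index_mem iP.
  move: iP; rewrite !mem_filter mem_iota Hi andbT => /negbT ->.
  by rewrite /= ltnNge leq_addr /=; lia.
- rewrite !index_cat !mem_filter Pm (negbTE Pm) !mem_iota /= eqxx size_iota.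
  by rewrite ltnn /=; lia.
- set w := wP ++ _.
  have -> : iota m.+2 d = map (addn m.+1) (iota 1 d) by rewrite -iotaDl addn1.
  rewrite -map_comp.
  apply/eq_in_map => j; rewrite mem_iota => Hj /=.
  rewrite /w index_cat ifF; last first.
    by rewrite mem_filter mem_iota; apply/negbTE/nandP; right; lia.
  rewrite index_cat mem_iota ifT ?index_iota; [|lia..].
  by rewrite -addnS; congr (_ + _); lia.
Qed.

Lemma lambda_rec_pi_of (P : pred nat) f n :
  n <= f -> lambda_rec f (pi_of P n) = pi_tree P n 0.
Proof.
elim: f n => [|f IH] n; first by rewrite leqn0 => /eqP ->.
case: (last_notinP P n) => [Pall | m d -> Pm Prun] n_le.
  by rewrite pi_of_all // pi_tree_all // lambda_rec_iota.
rewrite pi_of_last // pi_tree_last // lambda_rec_cat; first last.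
- apply/mapP => -[v]; rewrite (perm_mem (pi_of_perm P m)) mem_iota => v_m.
  by case: ifP => _; lia.
- by rewrite !size_map !size_iota addSn.
rewrite st_mono; last by move=> x y /=; case: ifP; case: ifP; lia.
rewrite st_id ?size_pi_of ?pi_of_perm // IH; last by move: n_le; lia.
rewrite st_mono; last by move=> x y; rewrite leq_add2l.
by rewrite st_id ?size_iota // lambda_rec_iota //; lia.
Qed.

Lemma lambda_piR n R : lambda (piR n R) = pi_tree (fun x => x \in R) n 0.
Proof. by rewrite /lambda -/(pi_of _ n) size_pi_of lambda_rec_pi_of. Qed.

Theorem lemma8p8 (n : nat) (r : tree) (R : seq nat) :
  tnodes r = n ->
  (forall x, x \in R -> 0 < x <= n) ->
  (tamari_le (lambda (piR n R)) r <-> admissible r R).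
Proof.
move=> <- _; rewrite lambda_piR /admissible admissible_recE; split.
- by move/adm_tamari_le; apply; apply: adm_pi_tree.
- exact: pi_tree_le.
Qed.
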